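(* Let $\mathbf{Y}\in\mathbb{R}^{d_1\times d_2}$, let $R\ge r$ be positive integers, and let $\mathbf{X}=\Pi_r(\mathbf{Y})$ with SVD $\mathbf{X}=\mathbf{U}\boldsymbol\Sigma\mathbf{V}^T$. Suppose there exist $\overline{\mathbf{U}}\in\mathbb{R}^{d_1\times R}$ and $\overline{\mathbf{V}}\in\mathbb{R}^{d_2\times R}$ such that $\mathrm{col}(\mathbf{U})\subseteq\mathrm{col}(\overline{\mathbf{U}})$, $\mathrm{col}(\mathbf{V})\subseteq\mathrm{col}(\overline{\mathbf{V}})$, and let $\mathcal{A}=\{\mathbf{A}\in\mathbb{R}^{d_1\times d_2}:\mathrm{col}(\mathbf{A}^T)\subseteq\mathrm{col}(\overline{\mathbf{V}}),\ \mathrm{col}(\mathbf{A})\subseteq\mathrm{col}(\overline{\mathbf{U}})\}$, a linear subspace. Let $\hat{\mathbf{X}}=\Pi_{\mathcal{A}}(\mathbf{Y})$. Then $\mathbf{X}=\Pi_r(\hat{\mathbf{X}})$.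
   Context: $\Pi_r(\mathbf{M})$ denotes a best rank-$\le r$ approximation of a matrix $\mathbf{M}$ in Frobenius norm (rank-$r$ truncated SVD); $\Pi_{\mathcal{A}}$ is the orthogonal (Frobenius) projection onto the subspace $\mathcal{A}$; $\mathrm{col}(\cdot)$ denotes column space. *)

From HB Require Import structures.
From mathcomp Require Import all_boot all_order all_algebra.
Set Implicit Arguments. Unset Strict Implicit. Unset Printing Implicit Defensive.
Import Order.TTheory GRing.Theory Num.Theory.
Local Open Scope ring_scope.

Definition frob_dot (R : ringType) (m n : nat) (M N : 'M[R]_(m, n)) : R :=
  \sum_(i < m) \sum_(j < n) M i j * N i j.

Definition frob2 (R : ringType) (m n : nat) (M : 'M[R]_(m, n)) : R :=
  frob_dot M M.

Definition col_sub (R : fieldType) (m n p : nat) (A : 'M[R]_(m, n)) (B : 'M[R]_(m, p)) : bool :=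
  (A^T <= B^T)%MS.

(* X is a best rank-<= r approximation of Y in Frobenius norm ("X = Pi_r(Y)") *)
Definition is_best_rank_approx (R : realFieldType) (m n r : nat)
    (Y X : 'M[R]_(m, n)) : Prop :=
  (\rank X <= r)%N /\
  forall Z : 'M[R]_(m, n), (\rank Z <= r)%N -> frob2 (Y - X) <= frob2 (Y - Z).

(* Xh is the orthogonal (Frobenius) projection of Y onto the subspace
   described by the predicate S ("Xh = Pi_S(Y)") *)
Definition is_orth_proj (R : realFieldType) (m n : nat)
    (S : 'M[R]_(m, n) -> Prop) (Y Xh : 'M[R]_(m, n)) : Prop :=
  S Xh /\ forall A, S A -> frob_dot (Y - Xh) A = 0.

Definition subspaceA (R : fieldType) (d1 d2 K : nat)
    (Ub : 'M[R]_(d1, K)) (Vb : 'M[R]_(d2, K)) (A : 'M[R]_(d1, d2)) : Prop :=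
  col_sub A^T Vb /\ col_sub A Ub.

(* Every W in the subspace A satisfies |Y - W|^2 = |Y - Xh|^2 + |Xh - W|^2
   (Pythagoras, since Y - Xh is orthogonal to A), so on A the best rank-r
   approximations of Y and of Xh coincide.  Any competitor Z is compressed
   to P1 Z P2, where P1, P2 are the orthogonal projectors onto col(Ub),
   col(Vb): this lands in A, does not raise the rank, and does not move Z
   away from Xh = P1 Xh P2.  X itself lies in A because its column and row
   spaces are those of U and V. *)
From HB Require Import structures.
From mathcomp Require Import all_boot all_order all_algebra.
From mathcomp Require Import ring.
Import Order.TTheory GRing.Theory Num.Theory.
Local Open Scope ring_scope.
Set Implicit Arguments. Unset Strict Implicit.

Section Frobenius.
Variable R : realFieldType.

Lemma frob_dotE m n (M N : 'M[R]_(m, n)) : frob_dot M N = \tr (M^T *m N).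
Proof.
rewrite /frob_dot /mxtrace exchange_big; apply: eq_bigr => j _.
by rewrite mxE; apply: eq_bigr => i _; rewrite mxE.
Qed.

Lemma frob_dotC m n (M N : 'M[R]_(m, n)) : frob_dot M N = frob_dot N M.
Proof. by rewrite !frob_dotE -mxtrace_tr trmx_mul trmxK. Qed.

Lemma frob_dotDr m n (M N1 N2 : 'M[R]_(m, n)) :
  frob_dot M (N1 + N2) = frob_dot M N1 + frob_dot M N2.
Proof. by rewrite !frob_dotE mulmxDr linearD. Qed.

Lemma frob_dotBr m n (M N1 N2 : 'M[R]_(m, n)) :
  frob_dot M (N1 - N2) = frob_dot M N1 - frob_dot M N2.
Proof. by rewrite !frob_dotE mulmxBr linearB. Qed.

Lemma frob2D m n (M N : 'M[R]_(m, n)) :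
  frob2 (M + N) = frob2 M + frob2 N + 2 * frob_dot M N.
Proof.
rewrite /frob2 frob_dotDr !(frob_dotC (M + N)) !frob_dotDr (frob_dotC N M).
ring.
Qed.

Lemma frob2_tr m n (M : 'M[R]_(m, n)) : frob2 M^T = frob2 M.
Proof. by rewrite /frob2 !frob_dotE trmxK -mxtrace_mulC. Qed.

Lemma frob2_ge0 m n (M : 'M[R]_(m, n)) : 0 <= frob2 M.
Proof.
by apply: sumr_ge0 => i _; apply: sumr_ge0 => j _; rewrite -expr2 sqr_ge0.
Qed.

Lemma frob2_eq0 m n (M : 'M[R]_(m, n)) : frob2 M = 0 -> M = 0.
Proof.
have sq_ge0 i j : 0 <= M i j * M i j by rewrite -expr2 sqr_ge0.
move=> /eqP; rewrite psumr_eq0 => [/allP M0|i _]; last exact: sumr_ge0.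
apply/matrixP => i j; move: (M0 i (mem_index_enum _)).
rewrite psumr_eq0 // => /allP /(_ j (mem_index_enum _)).
by rewrite -expr2 sqrf_eq0 mxE => /eqP.
Qed.

Lemma mulmx_tr_eq0 m n (M : 'M[R]_(m, n)) : M *m M^T = 0 -> M = 0.
Proof.
move=> MMt0; apply: trmx_inj; rewrite trmx0; apply: frob2_eq0.
by rewrite /frob2 frob_dotE trmxK MMt0 linear0.
Qed.

End Frobenius.

Section Projectors.
Variable R : realFieldType.

Definition orth_projector n (P : 'M[R]_n) : Prop := P^T = P /\ P *m P = P.

Lemma frob2_mulmx_projector_le m n (P : 'M[R]_m) (M : 'M[R]_(m, n)) :
  orth_projector P -> frob2 (P *m M) <= frob2 M.
Proof.
move=> [PT PP].
have PM_orth : frob_dot (P *m M) (M - P *m M) = 0.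
  by rewrite frob_dotE trmx_mul PT mulmxBr !mulmxA -(mulmxA _ P P) PP subrr linear0.
rewrite -{2}(subrK (P *m M) M) addrC frob2D PM_orth mulr0 addr0 lerDl.
exact: frob2_ge0.
Qed.

Lemma frob2_mulmx_projector_le_r m n (P : 'M[R]_n) (M : 'M[R]_(m, n)) :
  orth_projector P -> frob2 (M *m P) <= frob2 M.
Proof.
move=> projP; rewrite -frob2_tr trmx_mul -(frob2_tr M).
by case: (projP) => -> _; exact: frob2_mulmx_projector_le.
Qed.

Lemma row_free_gram_unit k n (B : 'M[R]_(k, n)) :
  row_free B -> B *m B^T \in unitmx.
Proof.
move=> freeB; rewrite -row_free_unit -kermx_eq0; apply/eqP.
set k0 := kermx _; have kerBBt : k0 *m (B *m B^T) = 0 := mulmx_ker _.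
apply: (row_free_inj freeB); rewrite /= mul0mx; apply: mulmx_tr_eq0.
by rewrite trmx_mul mulmxA -(mulmxA _ B) kerBBt mul0mx.
Qed.

Definition row_proj m n (W : 'M[R]_(m, n)) : 'M[R]_n :=
  (row_base W)^T *m invmx (row_base W *m (row_base W)^T) *m row_base W.

Section RowProj.
Variables (m n : nat) (W : 'M[R]_(m, n)).

Lemma row_proj_tr : (row_proj W)^T = row_proj W.
Proof.
rewrite /row_proj; move: (row_base W) => B.
by rewrite !trmx_mul trmxK trmx_inv trmx_mul trmxK mulmxA.
Qed.

Lemma row_proj_sub : (row_proj W <= W)%MS.
Proof. by rewrite -(eq_row_base W) submxMl. Qed.

Lemma row_proj_id p (x : 'M[R]_(p, n)) : (x <= W)%MS -> x *m row_proj W = x.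
Proof.
rewrite -(eq_row_base W) => /submxP [D ->]; rewrite /row_proj.
have := row_free_gram_unit (row_base_free W); move: (row_base W) => B BBt_unit.
by rewrite !mulmxA -(mulmxA D B) -(mulmxA D) mulmxV // mulmx1.
Qed.

Lemma row_proj_projector : orth_projector (row_proj W).
Proof. by split; [exact: row_proj_tr | exact/row_proj_id/row_proj_sub]. Qed.

End RowProj.
End Projectors.

Section BestApprox.
Variable R : realFieldType.

Lemma orth_proj_pythagoras m n (S : 'M[R]_(m, n) -> Prop) (Y Xh W : 'M[R]_(m, n)) :
  is_orth_proj S Y Xh -> S W -> frob2 (Y - W) = frob2 (Y - Xh) + frob2 (Xh - W).
Proof.
move=> [SXh orthS] SW.
have -> : Y - W = (Y - Xh) + (Xh - W) by rewrite addrA subrK.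
by rewrite frob2D frob_dotBr !orthS // subrr mulr0 addr0.
Qed.

Lemma best_rank_approx_orth_proj m n r (S : 'M[R]_(m, n) -> Prop)
    (c : 'M[R]_(m, n) -> 'M[R]_(m, n)) (Y Xh X : 'M[R]_(m, n)) :
  is_orth_proj S Y Xh -> S X -> is_best_rank_approx r Y X ->
  (forall Z, S (c Z)) -> (forall Z, (\rank (c Z) <= \rank Z)%N) ->
  (forall Z, frob2 (Xh - c Z) <= frob2 (Xh - Z)) ->
  is_best_rank_approx r Xh X.
Proof.
move=> projXh SX [rkX bestX] S_c rk_c dist_c; split=> // Z rkZ.
have := bestX (c Z) (leq_trans (rk_c Z) rkZ).
rewrite (orth_proj_pythagoras projXh SX) (orth_proj_pythagoras projXh (S_c Z)).
by rewrite lerD2l => /le_trans; apply.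
Qed.

End BestApprox.

Section SubspaceA.
Variables (R : realFieldType) (d1 d2 K : nat).
Variables (Ub : 'M[R]_(d1, K)) (Vb : 'M[R]_(d2, K)).

Definition compressA (Z : 'M[R]_(d1, d2)) : 'M[R]_(d1, d2) :=
  row_proj Ub^T *m Z *m row_proj Vb^T.

Lemma subspaceA_factor r1 r2 (U : 'M[R]_(d1, r1)) (D : 'M[R]_(r1, r2))
    (V : 'M[R]_(d2, r2)) :
  col_sub U Ub -> col_sub V Vb -> subspaceA Ub Vb (U *m D *m V^T).
Proof.
rewrite /subspaceA /col_sub trmxK => UUb VVb; split.
  exact: submx_trans (submxMl _ _) VVb.
by rewrite !trmx_mul trmxK mulmxA; exact: submx_trans (submxMl _ _) UUb.
Qed.

Lemma subspaceA_compress Z : subspaceA Ub Vb (compressA Z).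
Proof.
rewrite /subspaceA /col_sub trmxK /compressA; split.
  exact: submx_trans (submxMl _ _) (row_proj_sub _).
rewrite (trmx_mul (_ *m Z)) (trmx_mul _ Z) !row_proj_tr mulmxA.
exact: submx_trans (submxMl _ _) (row_proj_sub _).
Qed.

Lemma compressA_id A : subspaceA Ub Vb A -> compressA A = A.
Proof.
rewrite /subspaceA /col_sub trmxK => -[AVb AUb].
have P1A : row_proj Ub^T *m A = A.
  by apply: trmx_inj; rewrite trmx_mul row_proj_tr row_proj_id.
by rewrite /compressA P1A row_proj_id.
Qed.

Lemma rank_compressA Z : (\rank (compressA Z) <= \rank Z)%N.
Proof. exact: leq_trans (mxrankM_maxl _ _) (mxrankM_maxr _ _). Qed.

Lemma frob2_compressA_le A Z :
  subspaceA Ub Vb A -> frob2 (A - compressA Z) <= frob2 (A - Z).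
Proof.
move=> /compressA_id {1}<-; rewrite /compressA -mulmxBl -mulmxBr.
apply: le_trans (frob2_mulmx_projector_le_r _ (row_proj_projector _)) _.
exact: frob2_mulmx_projector_le (row_proj_projector _).
Qed.

End SubspaceA.

Theorem mainTheorem7 (R : rcfType) (d1 d2 r K : nat)
  (Y X : 'M[R]_(d1, d2))
  (U : 'M[R]_(d1, r)) (s : 'rV[R]_r) (V : 'M[R]_(d2, r))
  (Ub : 'M[R]_(d1, K)) (Vb : 'M[R]_(d2, K)) (Xh : 'M[R]_(d1, d2)) :
  (0 < r)%N -> (r <= K)%N ->
  is_best_rank_approx r Y X ->
  (* SVD of X: orthonormal columns, nonnegative diagonal *)
  U^T *m U = 1%:M -> V^T *m V = 1%:M -> (forall i, 0 <= s 0 i) ->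
  X = U *m diag_mx s *m V^T ->
  col_sub U Ub -> col_sub V Vb ->
  is_orth_proj (subspaceA Ub Vb) Y Xh ->
  is_best_rank_approx r Xh X.
Proof.
move=> _ _ bestX _ _ _ eX UUb VVb projXh.
apply: (best_rank_approx_orth_proj (c := compressA Ub Vb) projXh _ bestX).
- by rewrite eX; exact: subspaceA_factor.
- exact: subspaceA_compress.
- exact: rank_compressA.
- by move=> Z; apply: frob2_compressA_le; case: projXh.
Qed.
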